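(* Let $X$ be a finite set and $t$ a full support transition function. Then $t$ is menu invariant (i.e. the stationary distributions $\nu_A$ of $M_A$ coincide for all $A\in\mathcal{X}_2$) if and only if $t$ satisfies no investment: for every strict investment plan $i$ and every $\delta\in(0,1)$ there exists $\succ\in\mathcal{L}(X)$ such that $$\sum_{(A,\succ')\in\mathcal{X}_2\times\mathcal{L}(X)}\delta\, i(A,\succ')\,t_{\succ'}(M(\succ,A),\succ)<\sum_{A\in\mathcal{X}_2} i(A,\succ).$$
   Context: $X$ is a finite set; $\mathcal{X}_2$ is the collection of subsets of $X$ with at least two elements; $\mathcal{L}(X)$ the linear orders on $X$; $M(\succ,A)$ the $\succ$-maximal element of $A$. A transition function is $t:X\times\mathcal{L}(X)\to\Delta(\mathcal{L}(X))$, full support if all its values have full support; $t_{\succ'}(x,\succ)$ is the probability of $\succ'$ under $t(x,\succ)$. For $A\in\mathcal{X}_2$, $M_A$ is the Markov matrix on $\mathcal{L}(X)$ with entries $m_A(\succ,\succ')=t_{\succ'}(M(\succ,A),\succ)$, which for full support $t$ has a unique stationary distribution $\nu_A$. An investment plan is a function $i:\mathcal{X}_2\times\mathcal{L}(X)\to\mathbb{R}_{\ge 0}$; it is strict if it is not identically zero. *)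

From HB Require Import structures.
From mathcomp Require Import all_boot all_order all_algebra.
From mathcomp Require Import reals.
Set Implicit Arguments. Unset Strict Implicit. Unset Printing Implicit Defensive.
Import Order.TTheory GRing.Theory Num.Theory.
Local Open Scope ring_scope.

Section Defs.
Variable X : finType.

(* A (strict) linear order on X, encoded by its boolean graph: (x,y) is
   true iff x ≻ y.  Irreflexive, transitive, total on distinct elements. *)
Definition is_linear_order (f : {ffun X * X -> bool}) : bool :=
  [&& [forall x, ~~ f (x, x)],
      [forall x, forall y, forall z, f (x, y) && f (y, z) ==> f (x, z)] &
      [forall x, forall y, (x != y) ==> f (x, y) || f (y, x)]].

Definition linord : finType := {f : {ffun X * X -> bool} | is_linear_order f}.

Definition gt_lin (r : linord) (x y : X) : bool := (val r) (x, y).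

Definition in_X2 (A : {set X}) : bool := (1 < #|A|)%N.

Definition maxel (r : linord) (A : {set X}) : option X :=
  [pick x in A | [forall y in A, (y != x) ==> gt_lin r x y]].

Variable R : realType.

(* A transition function t : X × L(X) -> Δ(L(X)), curried:
   t x r r' = t_{r'}(x, r), probability of r' under t(x, r). *)
Definition transition_fn (t : X -> linord -> linord -> R) : Prop :=
  forall x r, (forall r', 0 <= t x r r') /\ \sum_(r' : linord) t x r r' = 1.

Definition full_support (t : X -> linord -> linord -> R) : Prop :=
  forall x r r', 0 < t x r r'.

Definition markov_entry (t : X -> linord -> linord -> R) (A : {set X})
    (r r' : linord) : R :=
  match maxel r A with Some x => t x r r' | None => 0 end.

Definition stationary (t : X -> linord -> linord -> R) (A : {set X})
    (nu : linord -> R) : Prop :=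
  (forall r, 0 <= nu r) /\ \sum_(r : linord) nu r = 1 /\
  forall r', \sum_(r : linord) nu r * markov_entry t A r r' = nu r'.

(* Menu invariance: the (unique, by full support) stationary distributions
   nu_A coincide for all A in X_2. *)
Definition menu_invariant (t : X -> linord -> linord -> R) : Prop :=
  forall A B : {set X}, in_X2 A -> in_X2 B ->
    forall nu, stationary t A nu -> stationary t B nu.

Definition strict_investment_plan (i : {set X} -> linord -> R) : Prop :=
  (forall A r, in_X2 A -> 0 <= i A r) /\
  (exists A r, in_X2 A /\ i A r != 0).

Definition no_investment (t : X -> linord -> linord -> R) : Prop :=
  forall (i : {set X} -> linord -> R) (delta : R),
    strict_investment_plan i -> 0 < delta < 1 ->
    exists r : linord,
      \sum_(A : {set X} | in_X2 A) \sum_(r' : linord)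
          delta * i A r' * markov_entry t A r r'
      < \sum_(A : {set X} | in_X2 A) i A r.

End Defs.

From HB Require Import structures.
From mathcomp Require Import all_boot all_order all_algebra.
From mathcomp Require Import reals.
From mathcomp Require Import ring lra.
Import Order.TTheory GRing.Theory Num.Theory.
Local Open Scope ring_scope.
Set Implicit Arguments. Unset Strict Implicit. Unset Printing Implicit Defensive.

(* Each menu chain M_A has full support, hence a unique stationary distribution,
   which is positive.  If all of them equal nu, averaging the no-investment
   inequality against nu turns its left side into delta times its right side,
   so some preference makes the investment strictly unprofitable.
   Conversely, if nu = nu_A is not stationary for M_B, then no nonzero vector is
   invariant under both M_A and M_B, so by the Fredholm alternative there are
   x, y with (M_A x - x) + (M_B y - y) = 1.  Shifted to be >= 1, x and y form an
   investment plan supported on {A, B} whose discounted return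
   delta (x + y + 1) covers its cost x + y at every preference once delta is
   close enough to 1. *)

Section LinearAlternative.
Variables (F : fieldType) (I J : finType) (K : I -> J -> F).

Let A : 'M[F]_(#|I|, #|J|) := \matrix_(a, b) K (enum_val a) (enum_val b).

Let sum_enum (T : finType) (f : 'I_#|T| -> F) :
  \sum_a f a = \sum_x f (enum_rank x).
Proof. by rewrite (reindex enum_rank) //; apply: onW_bij; exact: enum_rank_bij. Qed.

Lemma left_kernel_or_solvable :
  (exists2 w : I -> F, exists i, w i != 0 & forall j, \sum_i w i * K i j = 0) \/
  (forall g, exists z, forall i, \sum_j K i j * z j = g i).
Proof.
have [/row_freeP[B AB]|not_free] := boolP (row_free A); [right|left].
  move=> g; pose gc : 'cV_#|I| := \col_a g (enum_val a).
  exists (fun j => (B *m gc) (enum_rank j) 0) => i.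
  have /matrixP/(_ (enum_rank i) 0) := congr1 (mulmx^~ gc) AB.
  rewrite mul1mx -mulmxA !mxE enum_rankK => <-.
  by rewrite sum_enum; apply: eq_bigr => j _; rewrite !mxE !enum_rankK.
move: not_free; rewrite -kermx_eq0 => ker_neq0.
have /existsP[[a b] /= kab] : [exists ab : 'I_#|I| * 'I_#|I|, kermx A ab.1 ab.2 != 0].
  apply: contraR ker_neq0 => /existsPn ker0; apply/eqP/matrixP => a b.
  by have := ker0 (a, b); rewrite negbK [RHS]mxE => /eqP.
exists (fun i => kermx A a (enum_rank i)); first by exists (enum_val b); rewrite enum_valK.
move=> j; have /matrixP/(_ a (enum_rank j)) := mulmx_ker A.
rewrite [LHS]mxE [RHS]mxE sum_enum => ker_j; rewrite -[in RHS]ker_j.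
by apply: eq_bigr => i _; congr (_ * _); rewrite /A mxE !enum_rankK.
Qed.

End LinearAlternative.

Lemma big_pair_support (V : zmodType) (I : finType) (P : pred I) (a b : I) (F : I -> V) :
  P a -> P b -> a != b -> (forall c, c != a -> c != b -> F c = 0) ->
  \sum_(c | P c) F c = F a + F b.
Proof.
move=> Pa Pb ab F0; rewrite (bigD1 a) //= (bigD1 b) /=; last by rewrite Pb eq_sym.
by rewrite big1 ?addr0 // => c /andP[/andP[_ ca] cb]; exact: F0.
Qed.

Section FiniteFamilies.
Variables (R : realFieldType) (T : finType).

Lemma exists_lt_of_weighted_sum_lt (nu f g : T -> R) :
  (forall i, 0 <= nu i) -> \sum_i nu i * f i < \sum_i nu i * g i ->
  exists i, f i < g i.
Proof.
move=> nu_ge0 lt_fg; have [/existsP //|/existsPn g_le_f] := boolP [exists i, f i < g i].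
suff : \sum_i nu i * g i <= \sum_i nu i * f i by rewrite leNgt lt_fg.
by apply: ler_sum => i _; apply: ler_wpM2l => //; rewrite leNgt g_le_f.
Qed.

Lemma exists_shift_ge1 (x : T -> R) : exists c, forall i, 1 <= x i + c.
Proof.
exists (1 + \sum_i `|x i|) => i.
have : `|x i| <= \sum_j `|x j| by rewrite (bigD1 i) //= lerDl sumr_ge0.
by have := ler_norm (- x i); rewrite normrN; lra.
Qed.

Lemma exists_discount (s : T -> R) : (forall i, 0 <= s i) ->
  exists2 delta, 0 < delta < 1 & forall i, s i <= delta * (s i + 1).
Proof.
move=> s_ge0; set S := 1 + \sum_i s i.
have s_le i : s i <= S by rewrite /S (bigD1 i) //= addrCA lerDl addr_ge0 ?sumr_ge0.
have S_gt0 : 0 < S by rewrite /S ltr_pwDl // sumr_ge0.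
have S1_gt0 : 0 < S + 1 by lra.
exists (S / (S + 1)) => [|i].
  by rewrite divr_gt0 //= ltr_pdivrMr // mul1r ltrDl.
by rewrite mulrAC ler_pdivlMr //; have := s_le i; nra.
Qed.

End FiniteFamilies.

Section Stochastic.
Variables (R : realFieldType) (T : finType) (m : T -> T -> R).

Definition left_invariant (w : T -> R) := forall j, \sum_i w i * m i j = w j.

Definition drift (z : T -> R) i := \sum_j m i j * z j - z i.

Lemma left_invariant_lin a b u v :
  left_invariant u -> left_invariant v -> left_invariant (fun i => a * u i + b * v i).
Proof.
move=> u_inv v_inv j; rewrite -u_inv -v_inv !mulr_sumr -big_split /=.
by apply: eq_bigr => i _; rewrite mulrDl !mulrA.
Qed.

Let sum_mul_eq (w : T -> R) (j : T) : \sum_i w i * (i == j)%:R = w j.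
Proof.
by rewrite (bigD1 j) //= eqxx mulr1 big1 ?addr0 // => i /negbTE ->; rewrite mulr0.
Qed.

Lemma left_invariant_kernelE w :
  left_invariant w <-> forall j, \sum_i w i * (m i j - (i == j)%:R) = 0.
Proof.
have E j : \sum_i w i * (m i j - (i == j)%:R) = \sum_i w i * m i j - w j.
  by under eq_bigr do rewrite mulrBr; rewrite sumrB sum_mul_eq.
by split=> w_inv j; [rewrite E w_inv subrr | apply/eqP; rewrite -subr_eq0 -E w_inv].
Qed.

Lemma drift_kernelE z i : \sum_j (m i j - (i == j)%:R) * z j = drift z i.
Proof.
under eq_bigr do rewrite mulrBl [_%:R * _]mulrC eq_sym.
by rewrite sumrB sum_mul_eq.
Qed.

Hypothesis m_gt0 : forall i j, 0 < m i j.
Hypothesis m_row1 : forall i, \sum_j m i j = 1.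

Lemma drift_shift z c : drift (fun i => z i + c) =1 drift z.
Proof.
move=> i; rewrite /drift.
under eq_bigr do rewrite mulrDr.
by rewrite big_split /= -mulr_suml m_row1 mul1r opprD addrACA subrr addr0.
Qed.

Lemma exists_drift_le0 (i0 : T) z : exists i, drift z i <= 0.
Proof.
have [i _ z_max] := @arg_maxP _ R T i0 xpredT z isT.
exists i; rewrite /drift subr_le0 -[leRHS]mul1r -(m_row1 i) mulr_suml.
by apply: ler_sum => j _; apply: ler_wpM2l; [exact: ltW | exact: z_max].
Qed.

Lemma left_invariant_norm w : left_invariant w -> left_invariant (fun i => `|w i|).
Proof.
move=> w_inv.
have le_norm j : `|w j| <= \sum_i `|w i| * m i j.
  rewrite -{1}w_inv; apply: le_trans (ler_norm_sum _ _ _) _.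
  by apply: ler_sum => i _; rewrite normrM (gtr0_norm (m_gt0 _ _)).
have sum0 : \sum_j (\sum_i `|w i| * m i j - `|w j|) = 0.
  rewrite sumrB exchange_big /=.
  by under eq_bigr do rewrite -mulr_sumr m_row1 mulr1; rewrite subrr.
move=> j; apply/eqP; rewrite -subr_eq0; apply/eqP.
by apply: (psumr_eq0P _ sum0) => // k _; rewrite subr_ge0.
Qed.

Lemma left_invariant_gt0 p i0 :
  left_invariant p -> (forall i, 0 <= p i) -> 0 < p i0 -> forall j, 0 < p j.
Proof.
move=> p_inv p_ge0 p_i0 j; rewrite -p_inv (bigD1 i0) //=.
apply: ltr_pwDl; first by rewrite mulr_gt0.
by apply: sumr_ge0 => i _; rewrite mulr_ge0 ?p_ge0 ?ltW.
Qed.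

(* If [u] had a positive entry, the nonnegative invariant vector [|u| + u]
   would be positive everywhere, hence so would [u]. *)
Lemma left_invariant_sum0_le0 u :
  left_invariant u -> \sum_i u i = 0 -> forall j, u j <= 0.
Proof.
move=> u_inv sum0 j; rewrite leNgt; apply/negP => u_j.
have p_inv := left_invariant_lin 1 1 (left_invariant_norm u_inv) u_inv.
have p_ge0 k : 0 <= 1 * `|u k| + 1 * u k by have := ler_norm (- u k); rewrite normrN; lra.
have p_j : 0 < 1 * `|u j| + 1 * u j by rewrite !mul1r gtr0_norm // addr_gt0.
have u_gt0 k : 0 < u k.
  have := left_invariant_gt0 p_inv p_ge0 p_j k; rewrite !mul1r.
  by case: (ltP 0 (u k)) => // u_k; rewrite ler0_norm // addNr ltxx.
by move: u_j; rewrite (psumr_eq0P (fun k _ => ltW (u_gt0 k)) sum0) // ltxx.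
Qed.

Lemma left_invariant_sum0 u :
  left_invariant u -> \sum_i u i = 0 -> forall j, u j = 0.
Proof.
move=> u_inv sum0 j; apply/le_anti; rewrite left_invariant_sum0_le0 //=.
have v_inv := left_invariant_lin (-1) 0 u_inv u_inv.
have := left_invariant_sum0_le0 v_inv _ j; rewrite mul0r addr0 mulN1r oppr_le0; apply.
by under eq_bigr do rewrite mul0r addr0 mulN1r; rewrite sumrN sum0 oppr0.
Qed.

Lemma left_invariant_uniq nu w :
  left_invariant nu -> \sum_i nu i = 1 -> left_invariant w ->
  forall j, w j = (\sum_i w i) * nu j.
Proof.
move=> nu_inv nu1 w_inv j; set c := \sum_i w i.
have := left_invariant_sum0 (left_invariant_lin 1 (- c) w_inv nu_inv) _ j.
rewrite mul1r mulNr => u0; apply/eqP; rewrite -subr_eq0; apply/eqP/u0.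
by rewrite big_split /= -mulr_sumr -mulr_sumr nu1 mul1r mulr1 subrr.
Qed.

(* Were no nonzero vector invariant, [drift z = 1] would be solvable; it fails
   at a maximum of [z]. *)
Lemma exists_invariant_distribution (i0 : T) :
  exists nu, [/\ forall i, 0 < nu i, \sum_i nu i = 1 & left_invariant nu].
Proof.
have [[w [k w_k] /left_invariant_kernelE w_inv] | solvable] :=
  left_kernel_or_solvable (fun i j => m i j - (i == j)%:R); last first.
  have [z Kz1] := solvable (fun _ => 1); have [i] := exists_drift_le0 i0 z.
  by rewrite -drift_kernelE Kz1 ler10.
set S := \sum_i `|w i|.
have S_gt0 : 0 < S.
  rewrite lt_def sumr_ge0 // andbT; apply: contra w_k => /eqP S0.
  by rewrite -normr_eq0 (psumr_eq0P _ S0).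
have nu_inv : left_invariant (fun i => S^-1 * `|w i|).
  move=> j; rewrite -(left_invariant_norm w_inv j) mulr_sumr.
  by apply: eq_bigr => i _; rewrite mulrA.
exists (fun i => S^-1 * `|w i|); split=> //.
- apply: (left_invariant_gt0 (i0 := k)) => // [i|].
    by rewrite mulr_ge0 ?invr_ge0 // ltW.
  by rewrite mulr_gt0 ?invr_gt0 ?normr_gt0.
- by rewrite -mulr_sumr mulVf ?gt_eqF.
Qed.

End Stochastic.

Lemma left_invariant_or_drift_solvable (R : realFieldType) (T : finType)
    (m m' : T -> T -> R) nu :
  (forall i j, 0 < m i j) -> (forall i, \sum_j m i j = 1) ->
  left_invariant m nu -> \sum_i nu i = 1 ->
  left_invariant m' nu \/ exists x y, forall i, drift m x i + drift m' y i = 1.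
Proof.
move=> m_gt0 m_row1 nu_inv nu1.
pose K i (j : T + T) :=
  match j with inl j => m i j - (i == j)%:R | inr j => m' i j - (i == j)%:R end.
have [[w [k w_k] wK0] | solvable] := left_kernel_or_solvable K; [left | right].
  have w_inv : left_invariant m w.
    by apply/left_invariant_kernelE => j; exact: wK0 (inl j).
  have w_inv' : left_invariant m' w.
    by apply/left_invariant_kernelE => j; exact: wK0 (inr j).
  have w_nu := left_invariant_uniq m_gt0 m_row1 nu_inv nu1 w_inv.
  have c_neq0 : \sum_i w i != 0 by apply: contra w_k => /eqP c0; rewrite w_nu c0 mul0r.
  move=> j; apply: (mulfI c_neq0); rewrite -w_nu -(w_inv' j) mulr_sumr.
  by apply: eq_bigr => i _; rewrite w_nu mulrA.
have [z Kz1] := solvable (fun _ => 1).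
exists (fun i => z (inl i)), (fun i => z (inr i)) => i.
by rewrite -!drift_kernelE -[RHS](Kz1 i) big_sumType.
Qed.

(* An element of [A] with the most [r]-smaller elements in [A] is [r]-maximal. *)
Lemma maxel_some (X : finType) (r : linord X) (A : {set X}) x0 :
  x0 \in A -> exists x, maxel r A = Some x.
Proof.
move=> x0A; rewrite /maxel; case: pickP => [x _|no_max]; first by exists x.
case/and3P: (valP r) => /forallP irr /forallP trans /forallP total.
pose below x := #|[set y in A | gt_lin r x y]|.
have [x xA x_max] := arg_maxnP below x0A.
have {}xA : x \in A := xA.
have /negP[] := negbT (no_max x); rewrite /= xA /=.
apply/forall_inP => y yA; apply/implyP => y_neq_x; apply: contraT => not_xy.
have yx : gt_lin r y x.
  move: (total x) => /forallP/(_ y)/implyP; rewrite eq_sym y_neq_x => /(_ isT).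
  by rewrite /gt_lin in not_xy *; rewrite (negbTE not_xy).
have y_below : (below y <= below x)%N := x_max y yA.
suff : (below x < below y)%N by rewrite ltnNge y_below.
apply: proper_card; apply/properP; split.
  apply/subsetP => z; rewrite !inE => /andP[-> xz].
  move: (trans y) => /forallP/(_ x)/forallP/(_ z)/implyP; apply.
  by rewrite /gt_lin in yx xz *; rewrite yx xz.
by exists x; rewrite !inE xA //= /gt_lin (negbTE (irr x)).
Qed.

Section MenuInvariance.
Variables (X : finType) (R : realType) (t : X -> linord X -> linord X -> R).
Hypotheses (t_tr : transition_fn t) (t_full : full_support t).

Lemma markov_entry_row A r : in_X2 A -> exists x, markov_entry t A r =1 t x r.
Proof.
move=> AX; have /card_gt0P[x0 x0A] : (0 < #|A|)%N := ltnW AX.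
by rewrite /markov_entry; have [x ->] := maxel_some r x0A; exists x.
Qed.

Lemma markov_entry_gt0 A : in_X2 A -> forall r r', 0 < markov_entry t A r r'.
Proof. by move=> AX r r'; have [x ->] := markov_entry_row r AX; exact: t_full. Qed.

Lemma markov_entry_row1 A : in_X2 A -> forall r, \sum_r' markov_entry t A r r' = 1.
Proof.
move=> AX r; have [x Ex] := markov_entry_row r AX.
by rewrite (eq_bigr _ (fun r' _ => Ex r')); case: (t_tr x r).
Qed.

Lemma investment_weight_gt0 (nu : linord X -> R) (i : {set X} -> linord X -> R) :
  (forall r, 0 < nu r) -> strict_investment_plan i ->
  0 < \sum_r nu r * \sum_(C | in_X2 C) i C r.
Proof.
move=> nu_gt0 [i_ge0 [A [r [AX iAr]]]].
have iC_ge0 r' : 0 <= \sum_(C | in_X2 C) i C r' by apply: sumr_ge0 => C; exact: i_ge0.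
have terms_ge0 r' : 0 <= nu r' * \sum_(C | in_X2 C) i C r' by rewrite mulr_ge0 // ltW.
rewrite lt_def sumr_ge0 ?andbT //; apply: contra iAr => /eqP /psumr_eq0P sum0.
move: (sum0 (fun r' _ => terms_ge0 r') r isT) => /eqP.
rewrite mulf_eq0 gt_eqF //= => /eqP/psumr_eq0P iC0.
by rewrite (iC0 (fun C CX => i_ge0 C r CX) A AX).
Qed.

Lemma stationary_investment_value (nu : linord X -> R) (i : {set X} -> linord X -> R)
    delta :
  (forall C, in_X2 C -> left_invariant (markov_entry t C) nu) ->
  \sum_r nu r * (\sum_(C | in_X2 C) \sum_r' delta * i C r' * markov_entry t C r r')
  = delta * \sum_r nu r * \sum_(C | in_X2 C) i C r.
Proof.
move=> nuC.
transitivity (\sum_(C | in_X2 C) \sum_r' delta * i C r' * nu r').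
  under eq_bigr do rewrite mulr_sumr.
  rewrite exchange_big /=; apply: eq_bigr => C CX.
  under eq_bigr do rewrite mulr_sumr.
  rewrite exchange_big /=; apply: eq_bigr => r' _.
  by rewrite -(nuC C CX r') mulr_sumr; apply: eq_bigr => r _; ring.
rewrite mulr_sumr exchange_big /=; apply: eq_bigr => r' _.
by rewrite !mulr_sumr; apply: eq_bigr => C _; ring.
Qed.

Lemma menu_invariant_no_investment : menu_invariant t -> no_investment t.
Proof.
move=> mi i delta i_strict /andP[_ delta_lt1].
have [A0 [r0 [A0X _]]] := i_strict.2.
have [nu [nu_gt0 nu1 nuA0]] :=
  exists_invariant_distribution (markov_entry_gt0 A0X) (markov_entry_row1 A0X) r0.
have nuC C : in_X2 C -> left_invariant (markov_entry t C) nu.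
  move=> CX; have nu_ge0 r : 0 <= nu r := ltW (nu_gt0 r).
  by case: (mi A0 C A0X CX nu (conj nu_ge0 (conj nu1 nuA0))) => _ [].
apply: (@exists_lt_of_weighted_sum_lt _ _ nu) => [r|]; first exact: ltW.
by rewrite stationary_investment_value // gtr_pMl // investment_weight_gt0.
Qed.

Lemma not_no_investment_of_drift A B (x y : linord X -> R) (r0 : linord X) :
  in_X2 A -> in_X2 B -> A != B ->
  (forall r, drift (markov_entry t A) x r + drift (markov_entry t B) y r = 1) ->
  ~ no_investment t.
Proof.
move=> AX BX AB xy ni.
have [cx x_ge1] := exists_shift_ge1 x; have [cy y_ge1] := exists_shift_ge1 y.
pose a r := x r + cx; pose b r := y r + cy.
have ab r : drift (markov_entry t A) a r + drift (markov_entry t B) b r = 1.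
  rewrite /a /b (drift_shift (markov_entry_row1 AX)).
  by rewrite (drift_shift (markov_entry_row1 BX)).
have a_ge1 r : 1 <= a r := x_ge1 r.
have b_ge1 r : 1 <= b r := y_ge1 r.
have ab_ge0 r : 0 <= a r + b r by have := a_ge1 r; have := b_ge1 r; lra.
have [delta delta01 discount] := exists_discount (s := fun r => a r + b r) ab_ge0.
pose i C r := if C == A then a r else if C == B then b r else 0.
have i_out C : C != A -> C != B -> i C =1 (fun _ => 0).
  by move=> CA CB r; rewrite /i (negbTE CA) (negbTE CB).
have i_strict : strict_investment_plan i.
  split=> [C r _|]; last first.
    by exists A, r0; split=> //; rewrite /i eqxx lt0r_neq0 // (lt_le_trans ltr01).
  rewrite /i; case: ifP => _; first by rewrite (le_trans ler01).
  by case: ifP => _ //; rewrite (le_trans ler01).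
have [r] := ni i delta i_strict delta01; apply/negP; rewrite -leNgt.
rewrite (big_pair_support AX BX AB) => [|C CA CB]; last by rewrite (i_out C CA CB).
rewrite (big_pair_support AX BX AB) => [|C CA CB]; last first.
  by rewrite big1 // => r' _; rewrite (i_out C CA CB) mulr0 mul0r.
rewrite /i eqxx eq_sym (negbTE AB) eqxx.
have pull_delta m f : \sum_r' delta * f r' * m r r' = delta * \sum_r' m r r' * f r'.
  by rewrite mulr_sumr; apply: eq_bigr => r' _; ring.
rewrite !pull_delta -mulrDr.
have -> : \sum_r' markov_entry t A r r' * a r' + \sum_r' markov_entry t B r r' * b r'
    = a r + b r + 1 by move: (ab r); rewrite /drift; lra.
exact: discount.
Qed.

Lemma no_investment_menu_invariant : no_investment t -> menu_invariant t.
Proof.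
move=> ni A B AX BX nu [nu_ge0 [nu1 nuA]]; split=> //; split=> //.
have [<-|AB] := eqVneq A B; first exact: nuA.
have [r0 _] : exists r0, true && (0 < nu r0).
  by apply: psumr_neq0P => //; rewrite nu1 => /eqP; rewrite oner_eq0.
have [|[x [y xy]]] := left_invariant_or_drift_solvable (markov_entry t B)
  (markov_entry_gt0 AX) (markov_entry_row1 AX) nuA nu1; first by [].
by case: (not_no_investment_of_drift r0 AX BX AB xy ni).
Qed.

End MenuInvariance.

Theorem theorem2 (X : finType) (R : realType)
    (t : X -> linord X -> linord X -> R) :
  transition_fn t -> full_support t ->
  (menu_invariant t <-> no_investment t).
Proof.
move=> t_tr t_full; split.
  exact: menu_invariant_no_investment.
exact: no_investment_menu_invariant.
Qed.
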